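(* There exist an (infinite) distributive meet-complemented lattice $A$ and an element $a\in A$ such that $\Box a$ does not exist, i.e., the set $\{b\in A: a\vee\neg b=1\}$ has no maximum.
   Context: A meet-complemented lattice is a lattice $(L,\le)$ such that for every $a\in L$ the element $\neg a=\max\{b\in L: a\wedge b\le c\ \text{for all } c\in L\}$ exists; it is bounded with top $1$. $\Box a$ denotes $\max\{b\in L: a\vee\neg b=1\}$ when it exists. *)

From HB Require Import structures.
From mathcomp Require Import all_boot all_order.
Set Implicit Arguments. Unset Strict Implicit. Unset Printing Implicit Defensive.
Import Order.TTheory.
Local Open Scope order_scope.

Definition is_max d (L : porderType d) (P : L -> Prop) (m : L) : Prop :=
  P m /\ forall b, P b -> b <= m.

Definition is_neg d (L : latticeType d) (a n : L) : Prop :=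
  is_max (fun b => forall c : L, a `&` b <= c) n.

Definition meet_complemented d (L : latticeType d) : Prop :=
  forall a : L, exists n : L, is_neg a n.

Definition is_box d (L : tbLatticeType d) (a m : L) : Prop :=
  is_max (fun b => exists nb : L, is_neg b nb /\ a `|` nb = \top) m.

Definition infinite_carrier (T : eqType) : Prop :=
  ~ exists s : seq T, forall x : T, x \in s.

From HB Require Import structures.
From mathcomp Require Import all_boot all_order.
From mathcomp Require Import finmap.
Set Implicit Arguments. Unset Strict Implicit. Unset Printing Implicit Defensive.

(** Take the finite and cofinite subsets of [nat], and split every cofinite set
    [X] into two copies [(X, false) < (X, true)].  The pseudocomplement of a
    finite set [s] is the tagged copy [(nat \ s, true)], while that of a
    cofinite set is untagged.  Hence for [a := (nat, false)], the coatom, we get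
    [a \/ neg b = 1] exactly when [b] is finite, and the finite sets have no
    largest element. *)

Lemma exists_notin (s : seq nat) : exists n, n \notin s.
Proof.
exists (\max_(i <- s) i).+1; apply/negP => /leq_bigmax_seq.
by move=> /(_ predT id isT); rewrite ltnn.
Qed.

Lemma infinite_carrier_inj (T : eqType) (f : nat -> T) :
  injective f -> infinite_carrier T.
Proof.
move=> f_inj [s s_all].
have uniq_f : uniq [seq f i | i <- iota 0 (size s).+1].
  by rewrite map_inj_uniq // iota_uniq.
have := uniq_leq_size uniq_f (fun x _ => s_all x).
by rewrite size_map size_iota ltnn.
Qed.

Import Order.TTheory.
Local Open Scope order_scope.

Lemma is_negP d (L : bLatticeType d) (a n : L) :
  is_neg a n <-> a `&` n = \bot /\ (forall b, a `&` b = \bot -> b <= n).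
Proof.
have bot_below (b : L) : (forall c, a `&` b <= c) <-> a `&` b = \bot.
  by split=> [/(_ \bot)|-> c]; rewrite ?le0x // lex0 => /eqP.
split=> [[/bot_below an0 n_max]|[an0 n_max]].
  by split=> // b /bot_below; apply: n_max.
by split=> [|b /bot_below]; [apply/bot_below|apply: n_max].
Qed.

Lemma is_neg_unique d (L : latticeType d) (a n n' : L) :
  is_neg a n -> is_neg a n' -> n = n'.
Proof.
by move=> [n_disj n_max] [n'_disj n'_max]; apply: le_anti; rewrite n_max ?n'_max.
Qed.

Local Open Scope fset_scope.

(** [Fin s] is the finite set [s] and [Cof f s] the cofinite set [nat \ s]
    carrying the tag [f]. *)
Inductive fincof := Fin of {fset nat} | Cof of bool & {fset nat}.

Definition fincof_enc (x : fincof) : {fset nat} + (bool * {fset nat}) :=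
  match x with Fin s => inl s | Cof f s => inr (f, s) end.
Definition fincof_dec (y : {fset nat} + (bool * {fset nat})) : fincof :=
  match y with inl s => Fin s | inr (f, s) => Cof f s end.
Lemma fincof_encK : cancel fincof_enc fincof_dec. Proof. by case. Qed.
HB.instance Definition _ := Countable.copy fincof (can_type fincof_encK).

Definition fc_mem (x : fincof) (n : nat) : bool :=
  match x with Fin s => n \in s | Cof _ s => n \notin s end.
Definition fc_tag (x : fincof) : bool :=
  match x with Fin _ => false | Cof f _ => f end.

Lemma fc_tag_bounded (x : fincof) (s : {fset nat}) :
  (forall n, fc_mem x n -> n \in s) -> fc_tag x = false.
Proof.
case: x => [//|f t] /= x_sub; have [n] := exists_notin (s `|` t).
by rewrite in_fsetU negb_or => /andP[/negbTE n_s /x_sub]; rewrite n_s.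
Qed.

Lemma fincof_ext (x y : fincof) :
  fc_mem x =1 fc_mem y -> fc_tag x = fc_tag y -> x = y.
Proof.
case: x => [s|f s]; case: y => [t|g t] /= eq_mem eq_tag.
- by congr Fin; apply/fsetP.
(* A finite and a cofinite set disagree at any [n] outside both supports. *)
- have [n] := exists_notin (s `|` t); rewrite in_fsetU negb_or.
  by case/andP=> /negbTE n_s /negbTE n_t; move: (eq_mem n); rewrite /= n_s n_t.
- have [n] := exists_notin (s `|` t); rewrite in_fsetU negb_or.
  by case/andP=> /negbTE n_s /negbTE n_t; move: (eq_mem n); rewrite /= n_s n_t.
- by rewrite eq_tag; congr Cof; apply/fsetP => n; apply/negb_inj/eq_mem.
Qed.

Definition fc_meet (x y : fincof) : fincof :=
  match x, y with
  | Fin s, Fin t => Fin (s `&` t)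
  | Fin s, Cof _ t => Fin (s `\` t)
  | Cof _ s, Fin t => Fin (t `\` s)
  | Cof f s, Cof g t => Cof (f && g) (s `|` t)
  end.

Definition fc_join (x y : fincof) : fincof :=
  match x, y with
  | Fin s, Fin t => Fin (s `|` t)
  | Fin s, Cof g t => Cof g (t `\` s)
  | Cof f s, Fin t => Cof f (s `\` t)
  | Cof f s, Cof g t => Cof (f || g) (s `&` t)
  end.

Lemma fc_mem_meet x y n : fc_mem (fc_meet x y) n = fc_mem x n && fc_mem y n.
Proof.
case: x => [s|f s]; case: y => [t|g t] /=; rewrite ?in_fsetI ?in_fsetU ?in_fsetD;
  by case: (n \in s); case: (n \in t).
Qed.

Lemma fc_mem_join x y n : fc_mem (fc_join x y) n = fc_mem x n || fc_mem y n.
Proof.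
case: x => [s|f s]; case: y => [t|g t] /=; rewrite ?in_fsetI ?in_fsetU ?in_fsetD;
  by case: (n \in s); case: (n \in t).
Qed.

Lemma fc_tag_meet x y : fc_tag (fc_meet x y) = fc_tag x && fc_tag y.
Proof. by case: x => [s|f s]; case: y => [t|g t]; rewrite /= ?andbF. Qed.

Lemma fc_tag_join x y : fc_tag (fc_join x y) = fc_tag x || fc_tag y.
Proof. by case: x => [s|f s]; case: y => [t|g t]; rewrite /= ?orbF. Qed.

(* Reduces an identity between lattice terms to a boolean tautology,
   pointwise on memberships and on tags. *)
Ltac fincof_bool :=
  apply: fincof_ext => [n|];
  rewrite ?(fc_mem_meet, fc_mem_join, fc_tag_meet, fc_tag_join) /= ?in_fset0;
  repeat match goal with |- context [fc_mem ?x ?n] => case: (fc_mem x n) end;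
  repeat match goal with |- context [fc_tag ?x] => case: (fc_tag x) end.

Fact fincof_display : Order.disp_t. Proof. exact: Order.Disp tt tt. Qed.

Definition fc_le (x y : fincof) := fc_meet x y == x.
Definition fc_lt (x y : fincof) := (y != x) && fc_le x y.

Lemma fc_le_def x y : fc_le x y = (fc_meet x y == x). Proof. by []. Qed.
Lemma fc_lt_def x y : fc_lt x y = (y != x) && fc_le x y. Proof. by []. Qed.
Lemma fc_meetC : commutative fc_meet. Proof. by move=> x y; fincof_bool. Qed.
Lemma fc_joinC : commutative fc_join. Proof. by move=> x y; fincof_bool. Qed.
Lemma fc_meetA : associative fc_meet. Proof. by move=> x y z; fincof_bool. Qed.
Lemma fc_joinA : associative fc_join. Proof. by move=> x y z; fincof_bool. Qed.
Lemma fc_joinKI y x : fc_meet x (fc_join x y) = x. Proof. by fincof_bool. Qed.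
Lemma fc_meetKU y x : fc_join x (fc_meet x y) = x. Proof. by fincof_bool. Qed.
Lemma fc_meetUl : left_distributive fc_meet fc_join.
Proof. by move=> x y z; fincof_bool. Qed.
Lemma fc_meetxx : idempotent_op fc_meet. Proof. by move=> x; fincof_bool. Qed.

Local Open Scope order_scope.

HB.instance Definition _ := Order.isMeetJoinDistrLattice.Build fincof_display
  fincof fc_le_def fc_lt_def fc_meetC fc_joinC fc_meetA fc_joinA
  fc_joinKI fc_meetKU fc_meetUl fc_meetxx.

Lemma fc_le0x (x : fincof) : Fin fset0 <= x.
Proof. by apply/eqP; fincof_bool. Qed.

Lemma fc_lex1 (x : fincof) : x <= Cof true fset0.
Proof. by apply/eqP; fincof_bool. Qed.

HB.instance Definition _ := Order.hasBottom.Build fincof_display fincof fc_le0x.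
HB.instance Definition _ := Order.hasTop.Build fincof_display fincof fc_lex1.

Lemma fc_leP (x y : fincof) :
  x <= y <-> (forall n, fc_mem x n -> fc_mem y n) /\ (fc_tag x -> fc_tag y).
Proof.
split=> [/eqP xy_x|[sub_mem sub_tag]].
  by split=> [n|]; rewrite -xy_x ?fc_mem_meet ?fc_tag_meet => /andP[].
apply/eqP; apply: fincof_ext => [n|]; rewrite ?fc_mem_meet ?fc_tag_meet.
  by case x_n: (fc_mem x n); rewrite // sub_mem.
by case x_tag: (fc_tag x); rewrite // sub_tag.
Qed.

Lemma fc_mem0 n : fc_mem \bot n = false. Proof. exact: in_fset0. Qed.

Lemma fc_meet_eq0 (x y : fincof) :
  x `&` y = \bot <-> forall n, ~~ (fc_mem x n && fc_mem y n).
Proof.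
split=> [xy0 n|disj]; first by rewrite -fc_mem_meet [fc_meet _ _]xy0 fc_mem0.
apply: fincof_ext => [n|]; first by rewrite fc_mem_meet fc_mem0 (negbTE (disj n)).
by apply: (fc_tag_bounded (s := fset0)) => n; rewrite fc_mem_meet (negbTE (disj n)).
Qed.

Definition fc_neg (x : fincof) : fincof :=
  match x with Fin s => Cof true s | Cof _ s => Fin s end.

Lemma fc_mem_neg x n : fc_mem (fc_neg x) n = ~~ fc_mem x n.
Proof. by case: x => [s|f s] /=; rewrite ?negbK. Qed.

Lemma is_neg_fc_neg (x : fincof) : is_neg x (fc_neg x).
Proof.
apply/is_negP; split=> [|b /fc_meet_eq0 disj].
  by apply/fc_meet_eq0 => n; rewrite fc_mem_neg andbN.
have b_sub n : fc_mem b n -> ~~ fc_mem x n.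
  by move=> b_n; move: (disj n); rewrite b_n andbT.
apply/fc_leP; split=> [n|]; first by rewrite fc_mem_neg; apply: b_sub.
case: x b_sub {disj} => [//|f s] b_sub.
by rewrite (@fc_tag_bounded b s) // => n /b_sub /negPn.
Qed.

Lemma fincof_meet_complemented : meet_complemented fincof.
Proof. by move=> x; exists (fc_neg x); apply: is_neg_fc_neg. Qed.

Lemma fincof_infinite : infinite_carrier fincof.
Proof.
apply: (@infinite_carrier_inj _ (fun n => Fin [fset n])) => m n.
by move=> /(congr1 (fc_mem^~ m)) /=; rewrite !in_fset1 eqxx => /esym /eqP.
Qed.

Definition fc_finite (x : fincof) : bool := if x is Fin _ then true else false.

Definition fc_coatom : fincof := Cof false fset0.

Lemma fc_coatom_join_neg (b : fincof) :
  fc_coatom `|` fc_neg b = \top <-> fc_finite b.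
Proof. by case: b => [s|f s]; split=> // _; fincof_bool. Qed.

Lemma fc_coatom_box_set (b : fincof) :
  (exists nb, is_neg b nb /\ fc_coatom `|` nb = \top) <-> fc_finite b.
Proof.
split=> [[nb [/is_neg_unique neg_b]]|fin_b].
  by rewrite (neg_b _ (is_neg_fc_neg b)) => /fc_coatom_join_neg.
by exists (fc_neg b); split; [apply: is_neg_fc_neg|apply/fc_coatom_join_neg].
Qed.

Lemma fc_coatom_no_box : ~ exists m, is_box fc_coatom m.
Proof.
move=> [m [/fc_coatom_box_set]]; case: m => [s _ m_max|//].
have [k k_s] := exists_notin s.
have k_in_set := proj2 (fc_coatom_box_set (Fin [fset k])) isT.
have /fc_leP [/(_ k)] := m_max _ k_in_set.
by rewrite /= in_fset1 eqxx (negbTE k_s) => /(_ isT).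
Qed.

Theorem proposition14 :
  exists (d : Order.disp_t) (A : tbDistrLatticeType d),
    infinite_carrier A /\ meet_complemented A /\
    exists a : A, ~ (exists m : A, is_box a m).
Proof.
exists fincof_display, fincof; split; first exact: fincof_infinite.
split; first exact: fincof_meet_complemented.
by exists fc_coatom; apply: fc_coatom_no_box.
Qed.
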